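(* Let $n,k$ be integers with $2\le 2k\le n-4$ and let $\lambda\in\overline{\mathcal{U}}_{T_{n,n-2k}}$. Then the Young diagram $\mathrm{KN}(S_\lambda)$ has exactly $2n-3+2k$ cells; consequently the sum of the hook lengths of the cells on its main diagonal is $2n-3+2k$.
   Context: A partition of $N$ into distinct parts is a sequence $\lambda=(\lambda_1<\dots<\lambda_t)$ of positive integers with sum $N$ and $t\ge 2$, identified with its set of parts. Missing parts: $\mathcal{M}_\lambda=\{1,\dots,\lambda_t\}\setminus\lambda$. $\lambda$ is refinable if two distinct missing parts sum to a part of $\lambda$, unrefinable otherwise; $\mathcal{U}_N$ is the set of unrefinable partitions of $N$. An element of $\mathcal{U}_N$ is maximal if its largest part is the maximum of the largest parts of elements of $\mathcal{U}_N$; $\widetilde{\mathcal{U}}_N$ is the set of these and $\overline{\mathcal{U}}_N=\{\lambda\in\widetilde{\mathcal{U}}_N:\#\mathcal{M}_\lambda=\lfloor\lambda_t/2\rfloor\}$. $T_n=n(n+1)/2$, $T_{n,d}=T_n-d$. $S_\lambda=\mathbb{N}_0\setminus\lambda$. The Keith–Nath transformation sends a set $S\subseteq\mathbb{N}_0$ with $0\in S$ and finite complement to the Young diagram $\mathrm{KN}(S)$ whose boundary is the lattice path that, starting at the origin, takes for $j=0,1,\dots,\max(\mathbb{N}_0\setminus S)$ an east step if $j\in S$ and a north step otherwise. Hook length of a cell = (cells to its right in its row) + (cells below it in its column) + 1; the main diagonal consists of the cells in row $i$, column $i$. *)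

From mathcomp Require Import all_boot.
Set Implicit Arguments. Unset Strict Implicit. Unset Printing Implicit Defensive.

(* A partition into distinct parts is represented by the strictly increasing
   sequence of its parts lambda_1 < ... < lambda_t. *)
Definition distinct_partition (N : nat) (l : seq nat) : Prop :=
  [/\ sorted ltn l, all (fun x => 0 < x) l, sumn l = N & 2 <= size l].

Definition largest (l : seq nat) : nat := last 0 l.

Definition missing (l : seq nat) : seq nat :=
  [seq m <- iota 1 (largest l) | m \notin l].

Definition refinable (l : seq nat) : Prop :=
  exists a b, [/\ a \in missing l, b \in missing l, a != b & a + b \in l].

Definition unrefinable (N : nat) (l : seq nat) : Prop :=
  distinct_partition N l /\ ~ refinable l.

Definition maximal_unrefinable (N : nat) (l : seq nat) : Prop :=
  unrefinable N l /\ forall mu, unrefinable N mu -> largest mu <= largest l.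

Definition bar_U (N : nat) (l : seq nat) : Prop :=
  maximal_unrefinable N l /\ size (missing l) = (largest l)./2.

Definition T (n : nat) : nat := n * n.+1 %/ 2.
Definition Tnd (n d : nat) : nat := T n - d.

Definition S_of (l : seq nat) : pred nat := fun x => x \notin l.

(* For S with 0 \in S and finite complement whose
   maximum is m, the boundary path takes for j = 0..m an east step if j \in S
   and a north step otherwise.  The row of the diagram created at the north
   step j has as many cells as east steps preceding it.  Listing rows from the
   top (English convention: last north step first) gives the partition
   (weakly decreasing sequence of row lengths). *)
Definition KN (S : pred nat) (m : nat) : seq nat :=
  [seq count S (iota 0 j) | j <- rev (iota 0 m.+1) & ~~ S j].

Definition ncells (p : seq nat) : nat := sumn p.

Definition is_cell (p : seq nat) (r c : nat) : bool := c < nth 0 p r.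

Definition hook (p : seq nat) (r c : nat) : nat :=
  (nth 0 p r - c.+1) + count (fun r' => c < nth 0 p r') (iota r.+1 (size p - r.+1)) + 1.

Definition diag_hook_sum (p : seq nat) : nat :=
  \sum_(0 <= i < size p | is_cell p i i) hook p i i.

From mathcomp Require Import all_boot zify.

Set Implicit Arguments.
Unset Strict Implicit.
Unset Printing Implicit Defensive.

(* Maximality forces the largest part x of lambda to be at least 2n-5, because
   unrefinable partitions of T_{n,n-2k} with largest part 2n-5 exist.  With
   floor(x/2) missing parts, lambda has s = ceil(x/2) >= n-2 parts, and
   s >= n-1 would push its sum to at least T_n - 2; hence s = n-2.  The row of
   KN(S_lambda) created by the i-th smallest part lambda_i has lambda_i - i + 1
   cells, so the diagram has |lambda| - C(s,2) = 2n-3+2k cells.  In any Young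
   diagram the diagonal hook lengths add up to the number of cells. *)

Lemma bin2S m : 'C(m.+1, 2) = 'C(m, 2) + m.
Proof. by rewrite binS bin1. Qed.

Lemma bin2D a b : 'C(a + b, 2) = 'C(a, 2) + a * b + 'C(b, 2).
Proof.
elim: b => [|b IHb]; first by rewrite addn0 muln0 !addn0.
by rewrite addnS !bin2S IHb; lia.
Qed.

Lemma T_bin2 n : T n = 'C(n.+1, 2).
Proof. by rewrite /T bin2 /= mulnC divn2. Qed.

Lemma sumn_iota1 m : sumn (iota 1 m) = 'C(m.+1, 2).
Proof. by rewrite -bin2_sum sumnE /index_iota subn0 big_cons. Qed.

Lemma sum_nat_ltn c s : c <= s -> \sum_(0 <= i < s) (i < c : nat) = c.
Proof.
move=> le_cs; rewrite (big_cat_nat (leq0n c) le_cs) /=.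
rewrite [X in X + _](eq_big_nat _ _ (F2 := fun _ => 1)) => [|i /andP[_ ->] //].
rewrite sum_nat_const_nat muln1 subn0 big1_seq ?addn0 // => i.
by rewrite mem_index_iota => /andP[_ /andP[/leq_gtF ->]].
Qed.

Lemma sumn_sorted_ltn_lb c s :
  sorted ltn s -> all (leq c) s -> 'C(size s, 2) + c * size s <= sumn s.
Proof.
elim: s c => [|x s IHs] c; first by rewrite muln0.
move=> /= path_xs /andP[le_cx _].
have := IHs x.+1 (path_sorted path_xs) (order_path_min ltn_trans path_xs).
rewrite bin2S; nia.
Qed.

Lemma sorted_ltn_leq_last l x : sorted ltn l -> x \in l -> x <= last 0 l.
Proof.
case/lastP: l => [|p y] //; rewrite sorted_pairwise -?cats1 ?pairwise_cat; last exact: ltn_trans.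
case/and3P=> /allrelP lt_py _ _; rewrite last_cat /= mem_cat inE.
by case/orP=> [/lt_py/(_ (mem_head y [::]))/ltnW | /eqP ->].
Qed.

Lemma count_mem_iota_uniq l a m :
  uniq l -> count (mem l) (iota a m) = count (fun y => a <= y < a + m) l.
Proof.
move=> uniq_l; rewrite -!size_filter; apply: perm_size.
apply: uniq_perm; rewrite ?filter_uniq ?iota_uniq // => y.
by rewrite !mem_filter mem_iota andbC.
Qed.

Lemma size_missing l :
  sorted ltn l -> all (leq 1) l -> size (missing l) = largest l - size l.
Proof.
move=> sorted_l pos_l; have uniq_l := sorted_uniq ltn_trans ltnn sorted_l.
have in_range : count (fun y => 1 <= y < 1 + largest l) l = size l.
  apply/eqP; rewrite -all_count; apply/allP => y l_y.
  by rewrite (allP pos_l) //= add1n ltnS sorted_ltn_leq_last.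
have := count_predC (mem l) (iota 1 (largest l)).
rewrite size_iota count_mem_iota_uniq // in_range /missing size_filter.
by rewrite -[count _ (iota _ _)]/(count (predC (mem l)) _); lia.
Qed.

Lemma KN_sorted S m : sorted geq (KN S m).
Proof.
rewrite sorted_map; apply: sorted_filter; first exact/relpre_trans/rev_trans/leq_trans.
rewrite rev_sorted; apply: sub_sorted (iota_sorted 0 m.+1) => i j /= le_ij.
by rewrite -(subnKC le_ij) iotaD count_cat leq_addr.
Qed.

Lemma count_ltn_add_gtn x s :
  x \notin s -> count (ltn^~ x) s + count (ltn x) s = size s.
Proof.
elim: s => //= y s IHs; rewrite inE negb_or => /andP[ne_xy /IHs].
by case: ltngtP ne_xy => //= _ _; lia.
Qed.

Lemma sumn_count_ltn s :
  uniq s -> sumn [seq count (ltn^~ j) s | j <- s] = 'C(size s, 2).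
Proof.
elim: s => //= x s IHs /andP[s'x /IHs IHs']; rewrite ltnn bin2S -IHs'.
have := count_ltn_add_gtn s'x; rewrite -(sumn_count (ltn x)).
rewrite !sumnE !big_map big_split /=.
lia.
Qed.

Lemma count_S_of l j :
  uniq l -> count (S_of l) (iota 0 j) + count (ltn^~ j) l = j.
Proof.
move=> uniq_l; have := count_predC (mem l) (iota 0 j).
by rewrite size_iota count_mem_iota_uniq // addnC.
Qed.

Lemma ncells_KN l m :
  uniq l -> all (leq^~ m) l -> ncells (KN (S_of l) m) + 'C(size l, 2) = sumn l.
Proof.
move=> uniq_l le_lm.
have perm_l : perm_eq [seq j <- rev (iota 0 m.+1) | ~~ S_of l j] l.
  apply: uniq_perm; rewrite ?filter_uniq ?rev_uniq ?iota_uniq // => j.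
  rewrite mem_filter /S_of negbK mem_rev mem_iota andbC.
  by case l_j: (j \in l); rewrite ?andbT ?andbF // add0n ltnS (allP le_lm).
rewrite /ncells /KN (perm_sumn (perm_map _ perm_l)) -(sumn_count_ltn uniq_l).
rewrite !sumnE !big_map -big_split /=.
by apply: eq_bigr => j _; rewrite count_S_of.
Qed.

Lemma hook_diag_eq p i : sorted geq p -> i < size p ->
  (if is_cell p i i then hook p i i else 0) =
  (nth 0 p i - i) + \sum_(0 <= r < size p) ((i < r) && (i < nth 0 p r) : nat).
Proof.
move=> dec_p lt_ip.
have -> : \sum_(0 <= r < size p) ((i < r) && (i < nth 0 p r) : nat) =
          count (fun r => i < nth 0 p r) (iota i.+1 (size p - i.+1)).
  rewrite (big_cat_nat (leq0n i.+1) lt_ip) /= big1_seq => [|r]; last first.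
    by rewrite mem_index_iota ltnS => /andP[_ /leq_gtF ->].
  rewrite add0n -sum1_count [RHS]big_mkcond; apply: eq_big_nat => r /andP[lt_ir _].
  by rewrite lt_ir; case: (i < _).
rewrite /is_cell /hook; case: ltnP => [|le_pi]; first by lia.
rewrite (eq_in_count (a2 := pred0)) ?count_pred0 => [|r]; first by lia.
rewrite mem_iota => /andP[lt_ir lt_rp] /=; apply/negbTE; rewrite -leqNgt.
apply: leq_trans le_pi.
by apply: (sorted_leq_nth (rev_trans leq_trans) leqnn 0 dec_p); rewrite ?inE; lia.
Qed.

Lemma diag_hook_sum_ncells p : sorted geq p -> diag_hook_sum p = ncells p.
Proof.
move=> dec_p; rewrite /diag_hook_sum big_mkcond /=.
rewrite (eq_big_nat _ _ (fun i lt_ip => hook_diag_eq dec_p (proj2 (andP lt_ip)))).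
rewrite big_split /= exchange_big_nat /= -big_split /ncells sumnE [RHS](big_nth 0).
apply: eq_big_nat => r /andP[_ lt_rp] /=.
rewrite (eq_bigr (fun i => (i < minn r (nth 0 p r) : nat))) => [|i _]; last by rewrite leq_min.
by rewrite sum_nat_ltn; [lia | exact: leq_trans (geq_minl _ _) (ltnW lt_rp)].
Qed.

Lemma bin2_size_largest_le_sumn l :
  sorted ltn l -> all (leq 1) l -> 'C(size l, 2) + largest l <= sumn l.
Proof.
case/lastP: l => [|p x] //; rewrite -cats1 all_cat => /cat_sorted2[sorted_p _].
case/andP=> /(sumn_sorted_ltn_lb sorted_p) sumn_p _.
by rewrite cats1 /largest last_rcons size_rcons sumn_rcons bin2S; lia.
Qed.

Definition witness_tight n : seq nat := rcons (iota 1 (n - 2)) (2 * n - 5).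

Lemma unrefinable_witness_tight n :
  4 <= n -> unrefinable (T n - 4) (witness_tight n).
Proof.
move=> le4n.
have mem_w x : (x \in witness_tight n) = (0 < x < n - 1) || (x == 2 * n - 5).
  by rewrite mem_rcons inE mem_iota orbC add1n -subSn; last lia.
split; first split.
- rewrite /witness_tight -cats1 (sorted_pairwise ltn_trans) pairwise_cat.
  rewrite -(sorted_pairwise ltn_trans) iota_ltn_sorted allrel1r /= andbT.
  by apply/allP => x; rewrite mem_iota; lia.
- rewrite /witness_tight all_rcons; apply/andP; split; first lia.
  by apply/allP => x; rewrite mem_iota; lia.
- rewrite /witness_tight sumn_rcons sumn_iota1 T_bin2.
  have -> : n.+1 = (n - 2).+1 + 2 by lia.
  rewrite bin2D binn; lia.
- by rewrite size_rcons size_iota; lia.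
case=> a [b []]; rewrite /missing /largest last_rcons !mem_filter !mem_iota !mem_w.
lia.
Qed.

(* (n-3-k) + (n-2+k) = 2n-5, but n-2+k is a part, not a missing one. *)
Definition witness n k : seq nat :=
  [seq i <- iota 1 (n - 4) | i != n - 3 - k] ++ [:: n - 2; n - 2 + k; 2 * n - 5].

Lemma unrefinable_witness n k :
  1 <= k -> 2 * k + 4 < n -> unrefinable (Tnd n (n - 2 * k)) (witness n k).
Proof.
move=> k_gt0 lt_kn.
have mem_w x : (x \in witness n k) =
    [|| (0 < x < n - 3) && (x != n - 3 - k), x == n - 2, x == n - 2 + k | x == 2 * n - 5].
  by rewrite mem_cat mem_filter mem_iota !inE andbC add1n -subSn; last lia.
split; first split.
- rewrite /witness (sorted_pairwise ltn_trans) pairwise_cat.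
  rewrite -!(sorted_pairwise ltn_trans) sorted_filter ?iota_ltn_sorted //=; last exact: ltn_trans.
  apply/and3P; split; [|lia|lia].
  by apply/allrelP => x y; rewrite mem_filter mem_iota !inE; lia.
- rewrite /witness all_cat /=; apply/andP; split; last lia.
  by apply/allP => x; rewrite mem_filter mem_iota; lia.
- rewrite /witness /Tnd sumn_cat /= sumnE big_filter.
  have in_iota : n - 3 - k \in iota 1 (n - 4) by rewrite mem_iota; lia.
  have := bigD1_seq (F := id) (op := addn) (x := 0) _ in_iota (iota_uniq 1 (n - 4)).
  rewrite -sumnE sumn_iota1 T_bin2 /=.
  have -> : n.+1 = (n - 4).+1 + 4 by lia.
  by rewrite bin2D (_ : 'C(4, 2) = 6) //; lia.
- by rewrite /witness size_cat /=; lia.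
case=> a [b []]; rewrite /missing /largest last_cat /= !mem_filter !mem_iota !mem_w.
lia.
Qed.

Lemma exists_unrefinable_largest n k : 1 <= k -> 2 * k + 4 <= n ->
  exists2 mu, unrefinable (Tnd n (n - 2 * k)) mu & largest mu = 2 * n - 5.
Proof.
move=> k_gt0; rewrite leq_eqVlt => /predU1P[tight | lt_kn].
  exists (witness_tight n); last by rewrite /largest last_rcons.
  rewrite /Tnd (_ : n - 2 * k = 4); last lia.
  by apply: unrefinable_witness_tight; lia.
exists (witness n k); first exact: unrefinable_witness.
by rewrite /largest last_cat.
Qed.

Lemma size_bar_U n k l : 1 <= k -> 2 * k + 4 <= n ->
  bar_U (Tnd n (n - 2 * k)) l -> size l = n - 2.
Proof.
move=> k_gt0 le_kn [[[[sorted_l pos_l sum_l _] _] max_l] half_missing].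
have [mu mu_unref mu_largest] := exists_unrefinable_largest k_gt0 le_kn.
have := max_l mu mu_unref; rewrite mu_largest => le_largest.
rewrite size_missing // -divn2 in half_missing.
have := bin2_size_largest_le_sumn sorted_l pos_l.
rewrite sum_l /Tnd T_bin2 => sumn_lb.
suff : size l <= n - 2 by lia.
rewrite leqNgt; apply/negP => lt_size; have := leq_bin2l 2 lt_size.
rewrite (_ : n.+1 = (n - 2).+1 + 2) in sumn_lb; last lia.
by rewrite bin2D binn in sumn_lb; lia.
Qed.

Theorem proposition4p5 (n k : nat) (l : seq nat) :
  2 <= 2 * k -> 2 * k + 4 <= n ->
  bar_U (Tnd n (n - 2 * k)) l ->
  ncells (KN (S_of l) (largest l)) = 2 * n - 3 + 2 * k /\
  diag_hook_sum (KN (S_of l) (largest l)) = 2 * n - 3 + 2 * k.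
Proof.
move=> k_gt0 le_kn bar_l; have k_pos : 0 < k by lia.
have size_l := size_bar_U k_pos le_kn bar_l.
have [[[[sorted_l _ sum_l _] _] _] _] := bar_l.
have le_largest : all (leq^~ (largest l)) l.
  by apply/allP => x; apply: sorted_ltn_leq_last.
have ncells_l : ncells (KN (S_of l) (largest l)) = 2 * n - 3 + 2 * k.
  have := ncells_KN (sorted_uniq ltn_trans ltnn sorted_l) le_largest.
  rewrite size_l sum_l /Tnd T_bin2 (_ : n.+1 = (n - 2) + 3); last lia.
  by rewrite bin2D (_ : 'C(3, 2) = 3) //; lia.
by rewrite diag_hook_sum_ncells ?KN_sorted.
Qed.
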